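(* Let $\mathbb{L}/\mathbb{K}$ be a finite Galois extension of degree $N$ whose Galois group $G$ is abelian, let $\mathcal{C}\subseteq\mathbb{L}[G]$ be an $\mathbb{L}$-linear subspace, and let $\mathcal{B}$ be an ordered $\mathbb{K}$-basis of $\mathbb{L}$ with trace-dual basis $\mathcal{B}^*$. Then $\mathcal{C}^\perp(\mathcal{B})=\big(\mathcal{C}(\mathcal{B}^* )\big)^\perp$, where on the left $\perp$ is taken in $\mathbb{L}[G]$ with respect to $\langle\cdot,\cdot\rangle_{\mathbb{L}[G]}$ and on the right in $\mathbb{L}^N$ with respect to the standard inner product $\mathbf{u}\cdot\mathbf{v}^\top$.
   Context: Elements $a=\sum_g a_g g\in\mathbb{L}[G]$ act on $\mathbb{L}$ by $x\mapsto\sum_g a_gg(x)$. For $\mathbf{b}=(b_1,\dots,b_N)\in\mathbb{L}^N$, $\mathrm{ev}_\mathbf{b}(a)=(a(b_1),\dots,a(b_N))$, and for $\mathcal{C}\subseteq\mathbb{L}[G]$, $\mathcal{C}(\mathbf{b})=\{\mathrm{ev}_\mathbf{b}(c):c\in\mathcal{C}\}$. The bilinear form on $\mathbb{L}[G]$ is $\langle\sum_ga_gg,\sum_gb_gg\rangle_{\mathbb{L}[G]}=\sum_g a_gb_g$, and $\mathcal{C}^\perp=\{a\in\mathbb{L}[G]:\langle a,b\rangle_{\mathbb{L}[G]}=0\ \forall b\in\mathcal{C}\}$. The trace-dual basis $\mathcal{B}^*=(b_1^*,\dots,b_N^* )$ satisfies $\mathrm{Tr}_{\mathbb{L}/\mathbb{K}}(b_ib_j^*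 )=\delta_{i,j}$ with $\mathrm{Tr}_{\mathbb{L}/\mathbb{K}}(x)=\sum_{g\in G}g(x)$. *)

From HB Require Import structures.
From mathcomp Require Import all_boot all_order all_algebra all_fingroup all_field.
Set Implicit Arguments. Unset Strict Implicit. Unset Printing Implicit Defensive.
Import GRing.Theory.
Local Open Scope ring_scope.

(* Elements of the group algebra L[G] are modelled as finite functions
   a : {ffun gal_of {:L} -> L} with a g = 0 for g outside G
   (a = sum_{g in G} a g * g). *)

Section Defs.
Variables (F : fieldType) (L : splittingFieldType F) (K : {subfield L}).

Definition grpalg := {ffun gal_of {:L} -> L}.

Definition inLG (a : grpalg) : Prop :=
  forall g : gal_of {:L}, g \notin 'Gal({:L} / K)%g -> a g = 0.

Definition gaction (a : grpalg) (x : L) : L :=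
  \sum_(g in 'Gal({:L} / K)%g) a g * g x.

Definition evb (N : nat) (b : 'I_N -> L) (a : grpalg) : 'rV[L]_N :=
  \row_i gaction a (b i).

Definition LGform (a c : grpalg) : L :=
  \sum_(g in 'Gal({:L} / K)%g) a g * c g.

Definition LG_subspace (C : grpalg -> Prop) : Prop :=
  (forall a, C a -> inLG a) /\
  C [ffun => 0] /\
  (forall (l : L) a c, C a -> C c -> C [ffun g => l * a g + c g]).

Definition LGperp (C : grpalg -> Prop) (a : grpalg) : Prop :=
  inLG a /\ forall c, C c -> LGform a c = 0.

Definition evset (N : nat) (b : 'I_N -> L) (C : grpalg -> Prop)
    (v : 'rV[L]_N) : Prop :=
  exists c, C c /\ v = evb b c.

Definition is_K_basis (N : nat) (b : 'I_N -> L) : Prop :=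
  (forall x : L, exists c : 'I_N -> L,
      (forall i, c i \in K) /\ x = \sum_i c i * b i) /\
  (forall c : 'I_N -> L, (forall i, c i \in K) ->
      \sum_i c i * b i = 0 -> forall i, c i = 0).

Definition trace_dual (N : nat) (b bs : 'I_N -> L) : Prop :=
  forall i j, galTrace K {:L} (b i * bs j) = (i == j)%:R.

Definition dotL (N : nat) (u v : 'rV[L]_N) : L := \sum_i u 0 i * v 0 i.

Definition vecperp (N : nat) (V : 'rV[L]_N -> Prop) (u : 'rV[L]_N) : Prop :=
  forall v, V v -> dotL u v = 0.

End Defs.

From mathcomp Require Import all_boot all_order all_algebra all_fingroup all_field.
Set Implicit Arguments. Unset Strict Implicit. Unset Printing Implicit Defensive.
Local Open Scope ring_scope.
Import GRing.Theory.

(* Enumerate G = Gal(L/K) as e_0, ..., e_(|G|-1).  An element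
   a of L[G] is then its coefficient row vector (a(e_k))_k, and evaluation
   at a tuple b is right multiplication by the "evaluation matrix"
   M_b = (e_k(b_i))_(k,i):  ev_b(a) = coeffs(a) M_b.  The trace-dual
   condition Tr(b_i b*_j) = delta_ij says exactly M_b^T M_(b* ) = 1; since L/K
   is Galois, |G| = N, so the matrices are square and also M_b M_(b* )^T = 1.
   Two consequences give the theorem:
   - the duality formula ev_b(a) . ev_(b* )(c) = <a, c>_(L[G]), which yields
     the inclusion C^perp(b) <= (C(b* ))^perp;
   - ev_b is onto L^N, with explicit preimage of u the element
     g |-> sum_i u_i g(b*_i), which by the duality formula lies in C^perp
     as soon as u lies in (C(b* ))^perp. *)

Section EvaluationMatrices.
Variables (F : fieldType) (L : splittingFieldType F) (K : {subfield L}).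

Local Notation G := 'Gal({:L} / K)%g.

Let e : 'I_#|G| -> gal_of {:L} := @enum_val _ (mem G).

Definition coeffs (a : grpalg L) : 'rV[L]_#|G| := \row_k a (e k).

Definition evmx (N : nat) (b : 'I_N -> L) : 'M[L]_(#|G|, N) :=
  \matrix_(k, i) e k (b i).

Lemma evb_mx (N : nat) (b : 'I_N -> L) (a : grpalg L) :
  evb K b a = coeffs a *m evmx b.
Proof.
apply/rowP => i; rewrite !mxE /gaction.
rewrite (big_enum_val (fun g : gal_of {:L} => a g * g (b i))).
by apply: eq_bigr => k _; rewrite !mxE.
Qed.

Lemma dotL_mx (N : nat) (x y : 'rV[L]_N) : dotL x y = (x *m y^T) 0 0.
Proof. by rewrite !mxE; apply: eq_bigr => i _; rewrite !mxE. Qed.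

Lemma LGform_mx (a c : grpalg L) :
  LGform K a c = (coeffs a *m (coeffs c)^T) 0 0.
Proof.
rewrite /LGform (big_enum_val (fun g : gal_of {:L} => a g * c g)) !mxE.
by apply: eq_bigr => k _; rewrite !mxE.
Qed.

Lemma trace_dual_mx (N : nat) (b bs : 'I_N -> L) :
  trace_dual K b bs -> (evmx b)^T *m evmx bs = 1%:M.
Proof.
move=> dual_b; apply/matrixP => i j; rewrite !mxE -dual_b /galTrace.
rewrite (big_enum_val (fun g : gal_of {:L} => g (b i * bs j))).
by apply: eq_bigr => k _; rewrite !mxE rmorphM.
Qed.

(* When N = |G| the evaluation matrices are square, so the dual relation
   also holds in the other order. *)
Lemma trace_dual_mx_sym (b bs : 'I_#|G| -> L) :
  trace_dual K b bs -> evmx b *m (evmx bs)^T = 1%:M.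
Proof.
move=> dual_b; rewrite -[evmx b]trmxK -trmx_mul mulmx1C ?trmx1 //.
exact: trace_dual_mx.
Qed.

Lemma ev_dual_pairing (b bs : 'I_#|G| -> L) (a c : grpalg L) :
  trace_dual K b bs -> dotL (evb K b a) (evb K bs c) = LGform K a c.
Proof.
move=> dual_b; rewrite dotL_mx LGform_mx !evb_mx trmx_mul mulmxA.
by rewrite -(mulmxA _ (evmx b)) trace_dual_mx_sym // mulmx1.
Qed.

Definition dual_preimage (N : nat) (bs : 'I_N -> L) (u : 'rV[L]_N) :
    grpalg L :=
  [ffun g => if g \in G then \sum_i u 0 i * g (bs i) else 0].

Lemma dual_preimage_inLG (N : nat) (bs : 'I_N -> L) (u : 'rV[L]_N) :
  inLG K (dual_preimage bs u).
Proof. by move=> g /negbTE notGg; rewrite ffunE notGg. Qed.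

Lemma evb_dual_preimage (b bs : 'I_#|G| -> L) (u : 'rV[L]_#|G|) :
  trace_dual K b bs -> evb K b (dual_preimage bs u) = u.
Proof.
move=> dual_b.
have coeffs_preimage : coeffs (dual_preimage bs u) = u *m (evmx bs)^T.
  apply/rowP => k; rewrite !mxE ffunE enum_valP.
  by apply: eq_bigr => i _; rewrite !mxE.
rewrite evb_mx coeffs_preimage -mulmxA -[_ *m evmx b]trmxK trmx_mul trmxK.
by rewrite trace_dual_mx // trmx1 mulmx1.
Qed.

End EvaluationMatrices.

Theorem mainTheorem10 (F : fieldType) (L : splittingFieldType F)
  (K : {subfield L}) (N : nat) (B Bs : 'I_N -> L)
  (C : grpalg L -> Prop) :
  galois K {:L} ->
  abelian 'Gal({:L} / K)%g ->
  \dim_K {:L} = N ->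
  LG_subspace K C ->
  is_K_basis K B ->
  trace_dual K B Bs ->
  forall u : 'rV[L]_N,
    evset K B (LGperp K C) u <-> vecperp (evset K Bs C) u.
Proof.
move=> galKL _ dimL _ _ dual_B u.
rewrite galois_dim // in dimL; subst N.
split.
- move=> [a [[_ perp_a] ->]] v [c [Cc ->]].
  by rewrite ev_dual_pairing // perp_a.
- move=> perp_u; exists (dual_preimage K Bs u).
  rewrite evb_dual_preimage //; split=> //; split.
    exact: dual_preimage_inLG.
  move=> c Cc; rewrite -(ev_dual_pairing _ _ dual_B) evb_dual_preimage //.
  by apply: perp_u; exists c.
Qed.
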